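(* Let $J_1\in\mathbb{R}$, $J_2>0$, $T>0$, $\beta=1/T$, $a=e^{J_1\beta}$, $b=e^{J_2\beta}$, and $T_c=\frac{2J_2}{\ln 3}$. Consider the fixed points of $F$ lying in $M_1$ (called paramagnetic phases). If $T\ge T_c$, then $F$ has exactly one fixed point in $M_1$. If $T<T_c$, then $F$ has exactly three fixed points in $M_1$ when $b^3\sqrt{\nu_1}<a^{-1}<b^3\sqrt{\nu_2}$, and exactly two when $a^{-1}=b^3\sqrt{\nu_1}$ or $a^{-1}=b^3\sqrt{\nu_2}$, where $$\nu_i=\frac{1}{y_i}\left(\frac{1+y_i}{b^4+y_i}\right)^2,\quad i=1,2,$$ and $y_1<y_2$ are the two positive roots of $y^2+(3-b^4)y+b^4=0$.
   Context: $F:\mathbb{R}^4_+\to\mathbb{R}^4_+$ (positive coordinates) is $F(u)=(u_1',u_2',u_3',u_4')$ with $u_1'=a(bu_1+b^{-1}u_2)^2$, $u_2'=a^{-1}(bu_3+b^{-1}u_4)^2$, $u_3'=a^{-1}(b^{-1}u_1+bu_2)^2$, $u_4'=a(b^{-1}u_3+bu_4)^2$. $M_1=\{u\in\mathbb{R}^4_+:\ u_1=u_4,\ u_2=u_3\}$. This map is the recurrence for the partition functions of the Ising model on the Cayley tree of order 2 with nearest-neighbour coupling $J_1$ and prolonged next-nearest-neighbour coupling $J_2$ at inverse temperature $\beta$. *)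

From Stdlib Require Import Reals List.
Open Scope R_scope.

Record quad : Type := mkQ { q1 : R; q2 : R; q3 : R; q4 : R }.

Definition pos4 (u : quad) : Prop :=
  0 < q1 u /\ 0 < q2 u /\ 0 < q3 u /\ 0 < q4 u.

Definition F (a b : R) (u : quad) : quad :=
  mkQ (a * (b * q1 u + / b * q2 u) ^ 2)
      (/ a * (b * q3 u + / b * q4 u) ^ 2)
      (/ a * (/ b * q1 u + b * q2 u) ^ 2)
      (a * (/ b * q3 u + b * q4 u) ^ 2).

Definition M1 (u : quad) : Prop := pos4 u /\ q1 u = q4 u /\ q2 u = q3 u.

Definition para_fixed (a b : R) (u : quad) : Prop := M1 u /\ F a b u = u.

Definition has_exactly (n : nat) (P : quad -> Prop) : Prop :=
  exists l : list quad, NoDup l /\ length l = n /\ (forall u, In u l <-> P u).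

Definition nu (b y : R) : R := / y * ((1 + y) / (b ^ 4 + y)) ^ 2.

(* A point of M_1 is (x, z, z, x); writing x = s^2 z with s > 0, the second
   fixed-point equation determines z from s and the first one becomes
   s (s^2 + b^2) = a (b^2 s^2 + 1).  So the paramagnetic phases correspond to the
   positive roots of the cubic s^3 - a b^2 s^2 + b^2 s - a, i.e. to the solutions
   of [coupling b s = a].  For b^2 <= 3 (that is T >= T_c) the coupling is
   increasing, so there is exactly one phase.  Otherwise the critical points of
   the coupling are s_i = sqrt(y_i) / b, with 1 / coupling b s_i = b^3 sqrt(nu_i):
   when a lies strictly between the two critical values the cubic changes sign
   three times, and when a equals one of them s_i is a double root and the cubic
   has exactly one other root. *)
From Stdlib Require Import Reals List Lra Psatz.
Open Scope R_scope.

Definition cubic (p q c x : R) : R := x ^ 3 + p * x ^ 2 + q * x + c.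

Lemma cubic_continuous p q c : continuity (cubic p q c).
Proof. unfold cubic; reg. Qed.

Lemma cubic_root_between p q c x y :
  x < y -> cubic p q c x * cubic p q c y < 0 ->
  exists z, x < z < y /\ cubic p q c z = 0.
Proof.
  intros Hxy Hsign.
  destruct (IVT_cor (cubic p q c) x y (cubic_continuous p q c) (Rlt_le _ _ Hxy)
              (Rlt_le _ _ Hsign)) as [z [[Hxz Hzy] Hz]].
  exists z; split; [split|exact Hz].
  - destruct Hxz as [ | <-]; [assumption|]. rewrite Hz in Hsign; lra.
  - destruct Hzy as [ | ->]; [assumption|]. rewrite Hz in Hsign; lra.
Qed.

Lemma cubic_eventually_pos p q c y : exists x, y < x /\ 0 < cubic p q c x.
Proof.
  assert (Habs : forall r, - Rabs r <= r)
    by (intro r; pose proof (RRle_abs (- r)) as Hr; rewrite Rabs_Ropp in Hr; lra).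
  pose proof (Rabs_pos y); pose proof (Rabs_pos p); pose proof (RRle_abs y).
  pose proof (Rabs_pos q); pose proof (Rabs_pos c).
  set (M := 1 + Rabs y + Rabs p + Rabs q + Rabs c).
  assert (HM1 : 1 <= M) by (unfold M; lra).
  exists M; split; [unfold M; lra|].
  (* M + p >= 1 + |q| + |c|, and M^2 >= M >= 1 absorbs the lower-order terms *)
  assert (Hlead : M ^ 2 * (1 + Rabs q + Rabs c) <= M ^ 2 * (M + p))
    by (apply Rmult_le_compat_l; [apply pow2_ge_0 | unfold M; pose proof (Habs p); lra]).
  assert (HMM : M <= M ^ 2) by (simpl; nra).
  assert (M * Rabs q <= M ^ 2 * Rabs q) by (apply Rmult_le_compat_r; lra).
  assert (0 <= (M ^ 2 - 1) * Rabs c) by (apply Rmult_le_pos; lra).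
  assert (- Rabs q * M <= q * M) by (apply Rmult_le_compat_r; [|apply Habs]; lra).
  pose proof (Habs c).
  unfold cubic; lra.
Qed.

Lemma cubic_sub p q c x y :
  cubic p q c x - cubic p q c y = (x - y) * (x ^ 2 + x * y + y ^ 2 + p * (x + y) + q).
Proof. unfold cubic; ring. Qed.

Lemma cubic_roots_le3 p q c r1 r2 r3 x :
  cubic p q c r1 = 0 -> cubic p q c r2 = 0 -> cubic p q c r3 = 0 ->
  r1 <> r2 -> r1 <> r3 -> r2 <> r3 ->
  cubic p q c x = 0 -> x = r1 \/ x = r2 \/ x = r3.
Proof.
  intros H1 H2 H3 N12 N13 N23 Hx.
  destruct (Req_dec x r1) as [|N1]; [now left|].
  destruct (Req_dec x r2) as [|N2]; [now right; left|].
  right; right.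
  assert (quot : forall u, cubic p q c u = 0 -> u <> r1 ->
            u ^ 2 + u * r1 + r1 ^ 2 + p * (u + r1) + q = 0).
  { intros u Hu Nu. assert (E := cubic_sub p q c u r1). rewrite Hu, H1, Rminus_0_r in E.
    destruct (Rmult_integral _ _ (eq_sym E)); [lra | assumption]. }
  assert (Q2 := quot r2 H2 (not_eq_sym N12)).
  assert (Q3 := quot r3 H3 (not_eq_sym N13)).
  assert (Qx := quot x Hx N1).
  (* differences of these quadratics in the second root factor as (u - v)(r1 + u + v + p) *)
  assert (E3 : (r2 - r3) * (r1 + r2 + r3 + p) = 0) by nra.
  assert (Ex : (r2 - x) * (r1 + r2 + x + p) = 0) by nra.
  destruct (Rmult_integral _ _ E3); destruct (Rmult_integral _ _ Ex); lra.
Qed.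

Lemma cubic_double_root p q c s x :
  cubic p q c s = 0 -> 3 * s ^ 2 + 2 * p * s + q = 0 ->
  cubic p q c x = (x - s) ^ 2 * (x + p + 2 * s).
Proof.
  intros Hs Hds.
  transitivity (cubic p q c x - cubic p q c s - (x - s) * (3 * s ^ 2 + 2 * p * s + q));
    [rewrite Hs, Hds; ring | unfold cubic; ring].
Qed.

Definition para_cubic (a b : R) : R -> R := cubic (- (a * b ^ 2)) (b ^ 2) (- a).

Definition coupling (b s : R) : R := (s ^ 3 + b ^ 2 * s) / (b ^ 2 * s ^ 2 + 1).

Lemma coupling_denom_pos b s : 0 < b ^ 2 * s ^ 2 + 1.
Proof. rewrite <- Rpow_mult_distr. pose proof (pow2_ge_0 (b * s)). lra. Qed.

Lemma para_cubic_coupling a b s :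
  para_cubic a b s = (b ^ 2 * s ^ 2 + 1) * (coupling b s - a).
Proof.
  unfold para_cubic, cubic, coupling. field.
  rewrite Rpow_mult_distr; apply Rgt_not_eq, coupling_denom_pos.
Qed.

Lemma para_cubic_root a b s : para_cubic a b s = 0 <-> coupling b s = a.
Proof.
  rewrite para_cubic_coupling.
  pose proof (coupling_denom_pos b s).
  split; [intro E; destruct (Rmult_integral _ _ E) | intros ->]; lra.
Qed.

Lemma para_cubic_pos a b s : a < coupling b s -> 0 < para_cubic a b s.
Proof.
  intro H. rewrite para_cubic_coupling.
  apply Rmult_lt_0_compat; [apply coupling_denom_pos | lra].
Qed.

Lemma para_cubic_neg a b s : coupling b s < a -> para_cubic a b s < 0.
Proof.
  intro H. rewrite para_cubic_coupling. pose proof (coupling_denom_pos b s). nra.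
Qed.

Lemma para_cubic_0 a b : para_cubic a b 0 = - a.
Proof. unfold para_cubic, cubic; ring. Qed.

Lemma para_cubic_root_above a b y :
  para_cubic a b y < 0 -> exists r, y < r /\ para_cubic a b r = 0.
Proof.
  intro Hy.
  destruct (cubic_eventually_pos (- (a * b ^ 2)) (b ^ 2) (- a) y) as [M [HyM HM]].
  destruct (cubic_root_between (- (a * b ^ 2)) (b ^ 2) (- a) y M HyM) as [r [[Hyr _] Hr]];
    [unfold para_cubic in Hy; nra | exists r; split; assumption].
Qed.

Lemma coupling_pos b s : 0 < s -> 0 < coupling b s.
Proof.
  intro Hs. unfold coupling. apply Rdiv_lt_0_compat; [|apply coupling_denom_pos].
  pose proof (pow_lt s 3 Hs); pose proof (pow2_ge_0 b). nra.
Qed.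

Lemma coupling_increasing b s t :
  0 < b -> b ^ 2 <= 3 -> 0 <= s -> s < t -> coupling b s < coupling b t.
Proof.
  intros Hb Hb3 Hs Hst.
  set (B := b ^ 2) in *. assert (HB : 0 < B) by (unfold B; nra).
  assert (Hu : 0 <= s * t) by nra.
  assert (Hquad : 0 <= B * (s * t) ^ 2 + (3 - B ^ 2) * (s * t) + B).
  { destruct (Rle_lt_dec B 1).
    - assert (0 <= 3 - B ^ 2) by (simpl; nra).
      assert (0 <= (3 - B ^ 2) * (s * t)) by (apply Rmult_le_pos; lra).
      assert (0 <= B * (s * t) ^ 2) by (apply Rmult_le_pos; [lra | apply pow2_ge_0]).
      lra.
    - (* the discriminant (3 - B^2)^2 - 4 B^2 = -(B+3)(B+1)(B-1)(3-B) is <= 0 *)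
      assert (0 <= (B + 3) * (B + 1) * (B - 1) * (3 - B))
        by (repeat apply Rmult_le_pos; lra).
      assert (4 * B * (B * (s * t) ^ 2 + (3 - B ^ 2) * (s * t) + B)
              = (2 * B * (s * t) + 3 - B ^ 2) ^ 2 + (B + 3) * (B + 1) * (B - 1) * (3 - B))
        by ring.
      assert (0 <= (2 * B * (s * t) + 3 - B ^ 2) ^ 2) by apply pow2_ge_0.
      nra. }
  assert (Ds : 0 < B * s ^ 2 + 1) by nra.
  assert (Dt : 0 < B * t ^ 2 + 1) by nra.
  assert (Hdiff : coupling b t - coupling b s
                  = (t - s) * ((t - s) ^ 2 + B * (s * t) ^ 2 + (3 - B ^ 2) * (s * t) + B)
                    / ((B * s ^ 2 + 1) * (B * t ^ 2 + 1))).
  { unfold coupling; fold B. field. lra. }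
  assert (0 < coupling b t - coupling b s); [|lra].
  rewrite Hdiff. apply Rdiv_lt_0_compat; [|nra].
  apply Rmult_lt_0_compat; [lra|]. nra.
Qed.

(* The left-hand side is the derivative of para_cubic (coupling b s) b at s = sqrt y / b;
   its numerator, as a polynomial in y = b^2 s^2, is the critical quadratic. *)
Lemma coupling_critical b y :
  0 < b -> 0 < y -> y ^ 2 + (3 - b ^ 4) * y + b ^ 4 = 0 ->
  3 * (sqrt y / b) ^ 2 - 2 * coupling b (sqrt y / b) * b ^ 2 * (sqrt y / b) + b ^ 2 = 0.
Proof.
  intros Hb Hy Hq.
  assert (Hw : 0 < sqrt y) by (apply sqrt_lt_R0; lra).
  assert (Hww : sqrt y * sqrt y = y) by (apply sqrt_sqrt; lra).
  set (w := sqrt y) in *. clearbody w. subst y.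
  transitivity (((w * w) ^ 2 + (3 - b ^ 4) * (w * w) + b ^ 4) / (b ^ 2 * (w * w + 1)));
    [unfold coupling; field; split; nra | rewrite Hq; field; nra].
Qed.

Lemma nu_coupling b y :
  0 < b -> 0 < y -> b ^ 3 * sqrt (nu b y) = / coupling b (sqrt y / b).
Proof.
  intros Hb Hy.
  assert (Hw : 0 < sqrt y) by (apply sqrt_lt_R0; lra).
  assert (Hww : sqrt y * sqrt y = y) by (apply sqrt_sqrt; lra).
  set (w := sqrt y) in *. clearbody w. subst y.
  assert (Hden : 0 < b ^ 4 + w * w) by nra.
  set (k := (1 + w * w) / (w * (b ^ 4 + w * w))).
  assert (Hk : 0 <= k) by (left; apply Rdiv_lt_0_compat; nra).
  assert (Hnu : nu b (w * w) = k * k) by (unfold nu, k; field; lra).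
  rewrite Hnu, sqrt_square by exact Hk.
  unfold coupling, k. field. repeat split; try lra; nra.
Qed.

(* phase a b s is the point of M_1 with u1 = u4 = s^2 u2 whose u2 = u3 coordinate
   solves the second fixed-point equation *)
Definition phase_u2 (a b s : R) : R := a * (b / (b ^ 2 + s ^ 2)) ^ 2.

Definition phase (a b s : R) : quad :=
  mkQ (s ^ 2 * phase_u2 a b s) (phase_u2 a b s) (phase_u2 a b s) (s ^ 2 * phase_u2 a b s).

Lemma phase_u2_pos a b s : 0 < a -> 0 < b -> 0 < phase_u2 a b s.
Proof.
  intros Ha Hb. apply Rmult_lt_0_compat; [exact Ha|].
  apply pow_lt, Rdiv_lt_0_compat; [exact Hb|]. pose proof (pow2_ge_0 s). nra.
Qed.

Lemma phase_para_fixed a b s :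
  0 < a -> 0 < b -> 0 < s -> coupling b s = a -> para_fixed a b (phase a b s).
Proof.
  intros Ha Hb Hs Hc.
  assert (Hz := phase_u2_pos a b s Ha Hb).
  split.
  - unfold M1, pos4, phase; cbn [q1 q2 q3 q4].
    assert (0 < s ^ 2 * phase_u2 a b s) by (apply Rmult_lt_0_compat; [apply pow_lt|]; lra).
    repeat split; assumption.
  - subst a. unfold F, phase, phase_u2, coupling; cbn [q1 q2 q3 q4].
    assert (0 < (b * s) ^ 2 + 1) by (rewrite Rpow_mult_distr; apply coupling_denom_pos).
    assert (0 < b ^ 2 + s ^ 2) by nra.
    assert (0 < s ^ 3 + b ^ 2 * s) by (assert (0 < s ^ 3) by (apply pow_lt; lra); nra).
    f_equal; field; repeat split; lra.
Qed.

Lemma para_fixed_phase a b u :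
  0 < a -> 0 < b -> para_fixed a b u ->
  exists s, 0 < s /\ coupling b s = a /\ u = phase a b s.
Proof.
  intros Ha Hb [[[P1 [P2 [P3 P4]]] [E14 E23]] Hfix].
  destruct u as [x z z' x']; cbn [q1 q2 q3 q4] in *; subst x' z'.
  assert (Eq1 := f_equal q1 Hfix); assert (Eq2 := f_equal q2 Hfix).
  unfold F in Eq1, Eq2; cbn [q1 q2 q3 q4] in Eq1, Eq2.
  set (s := sqrt (x / z)).
  assert (Hs : 0 < s) by (apply sqrt_lt_R0, Rdiv_lt_0_compat; lra).
  assert (Hx : x = s ^ 2 * z)
    by (unfold s; simpl; rewrite Rmult_1_r, sqrt_sqrt; [field|left; apply Rdiv_lt_0_compat]; lra).
  clearbody s; subst x.
  set (D := b ^ 2 + s ^ 2). assert (HD : 0 < D) by (unfold D; nra).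
  set (G := b ^ 2 * s ^ 2 + 1). assert (HG : 0 < G) by apply coupling_denom_pos.
  replace (b * z + / b * (s ^ 2 * z)) with (z * D / b) in Eq2 by (unfold D; field; lra).
  replace (b * (s ^ 2 * z) + / b * z) with (z * G / b) in Eq1 by (unfold G; field; lra).
  assert (Hz : z * D ^ 2 = a * b ^ 2).
  { assert (Hprod : z * (z * D ^ 2 - a * b ^ 2) = 0).
    { transitivity (a * b ^ 2 * (/ a * (z * D / b) ^ 2 - z)); [field; lra|].
      replace (/ a * (z * D / b) ^ 2 - z) with 0 by lra; ring. }
    destruct (Rmult_integral _ _ Hprod); lra. }
  assert (Hsq : (s * D) ^ 2 = (a * G) ^ 2).
  { apply Rmult_eq_reg_l with z; [|lra].
    transitivity (s ^ 2 * z * D ^ 2); [ring|]. rewrite <- Eq1.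
    transitivity (a * G ^ 2 * z * (z * D ^ 2) / b ^ 2); [field; lra|].
    rewrite Hz. field. lra. }
  assert (Hroot : s * D = a * G).
  { assert (0 < s * D) by nra. assert (0 < a * G) by nra. nra. }
  exists s; split; [exact Hs|split].
  - unfold coupling; fold G.
    replace (s ^ 3 + b ^ 2 * s) with (s * D) by (unfold D; ring).
    rewrite Hroot. field. lra.
  - unfold phase, phase_u2. fold D.
    replace (a * (b / D) ^ 2) with z; [reflexivity|].
    apply Rmult_eq_reg_r with (D ^ 2); [|apply pow_nonzero; lra].
    rewrite Hz. field. lra.
Qed.

Lemma phase_inj a b s t :
  0 < a -> 0 < b -> 0 < s -> 0 < t -> phase a b s = phase a b t -> s = t.
Proof.
  intros Ha Hb Hs Ht H.
  assert (H1 := f_equal q1 H); assert (H2 := f_equal q2 H).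
  cbn [phase q1 q2] in H1, H2. rewrite H2 in H1.
  pose proof (phase_u2_pos a b t Ha Hb).
  apply Rmult_eq_reg_r in H1; [nra | lra].
Qed.

Lemma has_exactly_para_fixed a b l :
  0 < a -> 0 < b -> NoDup l ->
  (forall s, In s l <-> 0 < s /\ coupling b s = a) ->
  has_exactly (length l) (para_fixed a b).
Proof.
  intros Ha Hb Hl Hroots. exists (map (phase a b) l). split; [|split].
  - apply NoDup_map_NoDup_ForallPairs; [|exact Hl].
    intros s t Hs Ht. apply phase_inj; [| |apply Hroots, Hs|apply Hroots, Ht]; assumption.
  - apply length_map.
  - intro u; split.
    + intro Hin. apply in_map_iff in Hin. destruct Hin as [s [<- Hs]].
      apply Hroots in Hs as [Hs Hc]. apply phase_para_fixed; auto.
    + intro Hu. destruct (para_fixed_phase a b u Ha Hb Hu) as [s [Hs [Hc ->]]].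
      apply in_map, Hroots. auto.
Qed.

Lemma para_fixed_unique a b :
  0 < a -> 0 < b -> b ^ 2 <= 3 -> has_exactly 1 (para_fixed a b).
Proof.
  intros Ha Hb Hb3.
  destruct (para_cubic_root_above a b 0) as [r [Hr Hroot]]; [rewrite para_cubic_0; lra|].
  apply para_cubic_root in Hroot.
  change 1%nat with (length (r :: nil)).
  apply has_exactly_para_fixed; [assumption | assumption | repeat constructor; simpl; tauto|].
  intro s; split; [intros [<- | []]; split; assumption|].
  intros [Hs Hc]; left.
  destruct (Rtotal_order r s) as [Hlt | [Heq | Hgt]]; [|exact Heq|].
  - pose proof (coupling_increasing b r s Hb Hb3 (Rlt_le _ _ Hr) Hlt); lra.
  - pose proof (coupling_increasing b s r Hb Hb3 (Rlt_le _ _ Hs) Hgt); lra.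
Qed.

Lemma para_fixed_three a b s1 s2 :
  0 < a -> 0 < b -> 0 < s1 -> s1 < s2 ->
  a < coupling b s1 -> coupling b s2 < a -> has_exactly 3 (para_fixed a b).
Proof.
  intros Ha Hb Hs1 Hs12 H1 H2.
  apply para_cubic_pos in H1; apply para_cubic_neg in H2.
  assert (H0 : para_cubic a b 0 < 0) by (rewrite para_cubic_0; lra).
  destruct (cubic_root_between (- (a * b ^ 2)) (b ^ 2) (- a) 0 s1 Hs1) as [r1 [Hr1 R1]];
    [unfold para_cubic in *; nra|].
  destruct (cubic_root_between (- (a * b ^ 2)) (b ^ 2) (- a) s1 s2 Hs12) as [r2 [Hr2 R2]];
    [unfold para_cubic in *; nra|].
  destruct (para_cubic_root_above a b s2 H2) as [r3 [Hr3 R3]].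
  change (para_cubic a b r1 = 0) in R1; change (para_cubic a b r2 = 0) in R2.
  change 3%nat with (length (r1 :: r2 :: r3 :: nil)).
  apply has_exactly_para_fixed; [assumption | assumption | |].
  - repeat constructor; simpl; lra.
  - intro s; rewrite <- para_cubic_root; split.
    + intros [<- | [<- | [<- | []]]]; split; (assumption || lra).
    + intros [Hs Hroot]. simpl.
      destruct (cubic_roots_le3 _ _ _ r1 r2 r3 s R1 R2 R3 ltac:(lra) ltac:(lra) ltac:(lra) Hroot)
        as [-> | [-> | ->]]; tauto.
Qed.

Lemma para_fixed_two a b s :
  0 < a -> 0 < b -> b ^ 2 <> 3 -> 0 < s -> coupling b s = a ->
  3 * s ^ 2 - 2 * a * b ^ 2 * s + b ^ 2 = 0 -> has_exactly 2 (para_fixed a b).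
Proof.
  intros Ha Hb Hb3 Hs Hc Hcrit.
  apply para_cubic_root in Hc.
  set (t := a * b ^ 2 - 2 * s).
  assert (Hfact : forall x, para_cubic a b x = (x - s) ^ 2 * (x - t)).
  { intro x. unfold t, para_cubic. rewrite (cubic_double_root _ _ _ s x Hc); [ring | lra]. }
  assert (Hst : s ^ 2 * t = a) by (assert (E := Hfact 0); rewrite para_cubic_0 in E; lra).
  assert (Ht : 0 < t) by (destruct (Rlt_or_le 0 t); [assumption | nra]).
  assert (Hne : s <> t).
  { (* a triple root forces a = s^3, b^2 = 3 s^2 and a b^2 = 3 s, hence s = 1 and b^2 = 3 *)
    intro E. apply Hb3.
    assert (Hab : a * b ^ 2 = 3 * s) by (unfold t in E; lra).
    assert (Hb2 : b ^ 2 = 3 * s ^ 2) by nra.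
    assert (Ha3 : a = s ^ 3) by (rewrite <- Hst, <- E; ring).
    assert (Hs4 : (s ^ 2 - 1) * (s ^ 2 + 1) = 0).
    { apply Rmult_eq_reg_l with (3 * s); [|lra].
      transitivity (a * b ^ 2 - 3 * s); [rewrite Ha3, Hb2; ring | lra]. }
    destruct (Rmult_integral _ _ Hs4); nra. }
  change 2%nat with (length (s :: t :: nil)).
  apply has_exactly_para_fixed; [assumption | assumption | |].
  - repeat constructor; simpl; [intros [| []]; lra | tauto].
  - intro x; rewrite <- para_cubic_root, Hfact; split.
    + intros [<- | [<- | []]]; split; (assumption || ring).
    + intros [Hx Hroot]. simpl.
      destruct (Rmult_integral _ _ Hroot) as [E | E]; [left | right; left].
      * destruct (Req_dec x s) as [-> | N]; [reflexivity|].
        exfalso; apply (pow_nonzero (x - s) 2); [lra | exact E].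
      * symmetry; apply Rminus_diag_uniq, E.
Qed.

Lemma Rinv_lt_reg x y : 0 < x -> 0 < y -> / x < / y -> y < x.
Proof.
  intros Hx Hy H. rewrite <- (Rinv_inv x), <- (Rinv_inv y).
  apply Rinv_lt_contravar; [apply Rmult_lt_0_compat; apply Rinv_0_lt_compat|]; assumption.
Qed.

Lemma para_fixed_three_nu a b y1 y2 :
  0 < a -> 0 < b -> 0 < y1 -> y1 < y2 ->
  b ^ 3 * sqrt (nu b y1) < / a < b ^ 3 * sqrt (nu b y2) -> has_exactly 3 (para_fixed a b).
Proof.
  intros Ha Hb Hy1 Hy12 [L U].
  rewrite nu_coupling in L, U by lra.
  assert (Hw12 : sqrt y1 < sqrt y2) by (apply sqrt_lt_1; lra).
  assert (Hs1 : 0 < sqrt y1 / b) by (apply Rdiv_lt_0_compat; [apply sqrt_lt_R0|]; lra).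
  assert (Hs12 : sqrt y1 / b < sqrt y2 / b)
    by (apply Rmult_lt_compat_r; [apply Rinv_0_lt_compat|]; lra).
  apply (para_fixed_three a b (sqrt y1 / b) (sqrt y2 / b)); try assumption.
  - apply Rinv_lt_reg; [apply coupling_pos | |]; assumption.
  - apply Rinv_lt_reg; [|apply coupling_pos; lra|]; assumption.
Qed.

Lemma para_fixed_two_nu a b y :
  0 < a -> 0 < b -> b ^ 2 <> 3 -> 0 < y -> y ^ 2 + (3 - b ^ 4) * y + b ^ 4 = 0 ->
  / a = b ^ 3 * sqrt (nu b y) -> has_exactly 2 (para_fixed a b).
Proof.
  intros Ha Hb Hb3 Hy Hq E.
  rewrite nu_coupling in E by lra. apply Rinv_eq_reg in E.
  assert (Hs : 0 < sqrt y / b) by (apply Rdiv_lt_0_compat; [apply sqrt_lt_R0|]; lra).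
  apply (para_fixed_two a b (sqrt y / b)); try assumption; [now symmetry|].
  rewrite E. apply coupling_critical; assumption.
Qed.

Lemma crit_quadratic_b2_ne3 b y1 y2 :
  y1 < y2 -> y1 ^ 2 + (3 - b ^ 4) * y1 + b ^ 4 = 0 -> y2 ^ 2 + (3 - b ^ 4) * y2 + b ^ 4 = 0 ->
  b ^ 2 <> 3.
Proof.
  intros H12 Q1 Q2 E.
  replace (b ^ 4) with ((b ^ 2) ^ 2) in Q1, Q2 by ring. rewrite E in Q1, Q2.
  assert (root3 : forall y, y ^ 2 + (3 - 3 ^ 2) * y + 3 ^ 2 = 0 -> y = 3).
  { intros y Q. destruct (Req_dec y 3) as [| N]; [assumption|].
    exfalso; apply (pow_nonzero (y - 3) 2); [lra | rewrite <- Q; ring]. }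
  apply root3 in Q1; apply root3 in Q2. lra.
Qed.

Lemma exp_sq_le_3 J2 T : 0 < T -> 2 * J2 / ln 3 <= T -> exp (J2 * / T) ^ 2 <= 3.
Proof.
  intros HT HTc.
  assert (Hl3 : 0 < ln 3) by (rewrite <- ln_1; apply ln_increasing; lra).
  assert (Hexp : exp (J2 * / T) ^ 2 = exp (2 * J2 / T))
    by (simpl; rewrite Rmult_1_r, <- exp_plus; f_equal; field; lra).
  assert (Hle : 2 * J2 / T <= ln 3).
  { apply Rmult_le_reg_r with (T / ln 3); [apply Rdiv_lt_0_compat; assumption|].
    replace (2 * J2 / T * (T / ln 3)) with (2 * J2 / ln 3) by (field; lra).
    replace (ln 3 * (T / ln 3)) with T by (field; lra). exact HTc. }
  rewrite Hexp, <- (exp_ln 3) by lra.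
  destruct Hle as [Hlt | ->]; [left; apply exp_increasing, Hlt | right; reflexivity].
Qed.

Theorem theorem1 (J1 J2 T : R) (hJ2 : 0 < J2) (hT : 0 < T) :
  let beta := / T in
  let a := exp (J1 * beta) in
  let b := exp (J2 * beta) in
  let Tc := 2 * J2 / ln 3 in
  (Tc <= T -> has_exactly 1 (para_fixed a b)) /\
  (T < Tc ->
   forall y1 y2 : R,
     0 < y1 -> y1 < y2 ->
     y1 ^ 2 + (3 - b ^ 4) * y1 + b ^ 4 = 0 ->
     y2 ^ 2 + (3 - b ^ 4) * y2 + b ^ 4 = 0 ->
     (b ^ 3 * sqrt (nu b y1) < / a < b ^ 3 * sqrt (nu b y2) ->
        has_exactly 3 (para_fixed a b)) /\
     ((/ a = b ^ 3 * sqrt (nu b y1) \/ / a = b ^ 3 * sqrt (nu b y2)) ->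
        has_exactly 2 (para_fixed a b))).
Proof.
  intros beta a b Tc.
  assert (Ha : 0 < a) by apply exp_pos.
  assert (Hb : 0 < b) by apply exp_pos.
  split.
  - intro HTc. apply para_fixed_unique; [assumption | assumption | exact (exp_sq_le_3 J2 T hT HTc)].
  - intros _ y1 y2 Hy1 Hy12 Q1 Q2.
    assert (Hb3 := crit_quadratic_b2_ne3 b y1 y2 Hy12 Q1 Q2).
    split.
    + apply para_fixed_three_nu; assumption.
    + intros [E | E]; [apply (para_fixed_two_nu a b y1) | apply (para_fixed_two_nu a b y2)];
        (assumption || lra).
Qed.
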